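(* Let $\tau>0$, $T=\tau$, $H\in(1/2,1)$, $\lambda\in(1/2,H)$, and let $B^H$ be a fractional Brownian motion on $[0,T]$ with Hurst parameter $H$; fix a path of $B^H$ which is $\lambda$-Hölder continuous on $[0,T]$ and write $\|B^H\|_\lambda$ for its $\lambda$-Hölder seminorm on $[0,T]$. Let $\xi\in C^\lambda([-\tau,0];\mathbb{R})$ and let $f:C^\lambda([-\tau,0];\mathbb{R})\to\mathbb{R}$ satisfy $|f(\psi_2)-f(\psi_1)|\le M_1\|\psi_2-\psi_1\|$ for all $\psi_1,\psi_2\in C^\lambda([-\tau,0];\mathbb{R})$, for some constant $M_1>0$. Let $n>\tau$ be an integer, $\Delta=\tau/n$, $t_k=k\Delta$ for $k=-n,\dots,n$, and let $X^{(n)}$ be the Euler scheme $$X^{(n)}(t)=\xi(t),\ t\in[-\tau,0];\qquad X^{(n)}(t)=X^{(n)}(t_k)+f(\overline X^{(n)}_{t_k})\,(B^H(t)-B^H(t_k)),\ t\in[t_k,t_{k+1}],\ k=0,\dots,n-1.$$ For $s\le t$ in $\{t_0,\dots,t_n\}$ define $R^n(s,t)=X^{(n)}(t)-X^{(n)}(s)-f(\overline X^{(n)}_s)(B^H(t)-B^H(s))$. Then for all $s\le u\le t$ in $\{t_0,\dots,t_n\}$, $$|R^n(s,t)-R^n(s,u)-R^n(u,t)|\le M_1\,\|\overline X^{(n)}_u-\overline X^{(n)}_s\|\,\|B^H\|_\lambda\,|t-s|^\lambda.$$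
   Context: $\|\cdot\|$ denotes the supremum norm on $[-\tau,0]$. For $t\in[0,T]$, the segment $\overline X^{(n)}_t:[-\tau,0]\to\mathbb{R}$ is $\overline X^{(n)}_t(\theta)=X^{(n)}(t+\theta)$. $C^\lambda([-\tau,0];\mathbb{R})$ is the space of $\lambda$-Hölder continuous real functions on $[-\tau,0]$. *)

From HB Require Import structures.
From mathcomp Require Import all_boot all_order all_algebra.
From mathcomp Require Import all_classical all_reals.
From mathcomp Require Import topology normedtype exp.
Set Implicit Arguments. Unset Strict Implicit. Unset Printing Implicit Defensive.
Import Order.TTheory GRing.Theory Num.Theory.
Local Open Scope classical_set_scope.
Local Open Scope ring_scope.

Section Defs.
Variable R : realType.

Definition is_holder (lam a b : R) (g : R -> R) : Prop :=
  exists C : R, forall s t, a <= s <= b -> a <= t <= b ->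
    `|g t - g s| <= C * `|t - s| `^ lam.

Definition holder_seminorm (lam a b : R) (g : R -> R) : R :=
  sup [set x : R | exists s t : R, a <= s <= b /\ a <= t <= b /\ s != t /\
        x = `|g t - g s| / `|t - s| `^ lam].

Definition supnorm (tau : R) (psi : R -> R) : R :=
  sup [set x : R | exists theta : R, - tau <= theta <= 0 /\ x = `|psi theta|].

Definition segment (X : R -> R) (t : R) : R -> R := fun theta => X (t + theta).

Definition remR (f : (R -> R) -> R) (B X : R -> R) (s t : R) : R :=
  X t - X s - f (segment X s) * (B t - B s).

End Defs.

From HB Require Import structures.
From mathcomp Require Import all_boot all_order all_algebra.
From mathcomp Require Import all_classical all_reals.
From mathcomp Require Import topology normedtype exp.
From mathcomp Require Import ring lra.
Import Order.TTheory GRing.Theory Num.Theory.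
Local Open Scope ring_scope.

(* The defect of the remainder is exactly (f(Xbar_u) - f(Xbar_s)) (B(t) - B(u)).
   The first factor is controlled by the Lipschitz property of f, provided the
   segments are Hoelder; they are, because the Euler scheme is obtained by gluing
   xi with finitely many pieces that are affine in the Hoelder path B. The second
   factor is at most ||B||_lam |t - u|^lam <= ||B||_lam |t - s|^lam. *)

Lemma remR_defect (R : realType) (f : (R -> R) -> R) (B X : R -> R) (s u t : R) :
  remR f B X s t - remR f B X s u - remR f B X u t
  = (f (segment X u) - f (segment X s)) * (B t - B u).
Proof. by rewrite /remR; ring. Qed.

Lemma grid_le {R : numDomainType} {D : R} {k m : nat} : 0 <= D -> (k <= m)%N ->
  k%:R * D <= m%:R * D.
Proof. by move=> D0 km; rewrite ler_wpM2r ?ler_nat. Qed.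

Section Hoelder.
Context {R : realType}.
Implicit Types (lam a b c : R) (g h : R -> R).

Lemma is_holder_ge0_constant lam a b g : is_holder lam a b g ->
  exists2 C, 0 <= C & forall s t, a <= s <= b -> a <= t <= b ->
    `|g t - g s| <= C * `|t - s| `^ lam.
Proof.
move=> [C gC]; exists `|C| => // s t sab tab.
apply: le_trans (gC s t sab tab) _.
by apply: ler_wpM2r; [exact: powR_ge0 | exact: ler_norm].
Qed.

Lemma eq_is_holder lam a b g h : (forall x, a <= x <= b -> g x = h x) ->
  is_holder lam a b g -> is_holder lam a b h.
Proof. by move=> gh [C gC]; exists C => s t sab tab; rewrite -!gh //; exact: gC. Qed.

Lemma is_holder_subinterval lam a b a' b' g : a <= a' -> b' <= b ->
  is_holder lam a b g -> is_holder lam a' b' g.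
Proof.
move=> aa' b'b [C gC]; exists C => s t /andP[? ?] /andP[? ?].
by apply: gC; apply/andP; split; lra.
Qed.

Lemma is_holder_affine lam a b x0 c y0 g h :
  (forall t, a <= t <= b -> h t = x0 + c * (g t - y0)) ->
  is_holder lam a b g -> is_holder lam a b h.
Proof.
move=> hE [C gC]; exists (`|c| * C) => s t sab tab.
have -> : h t - h s = c * (g t - g s) by rewrite !hE //; ring.
by rewrite normrM -mulrA ler_wpM2l // gC.
Qed.

Lemma is_holder_glue lam a b c g : 0 <= lam -> a <= b -> b <= c ->
  is_holder lam a b g -> is_holder lam b c g -> is_holder lam a c g.
Proof.
move=> lam0 ab bc /is_holder_ge0_constant[C1 C10 gC1].
move=> /is_holder_ge0_constant[C2 C20 gC2].
have powR_dist_le x y s t : s <= x -> x <= y -> y <= t ->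
    `|y - x| `^ lam <= `|t - s| `^ lam.
  by move=> *; apply: ge0_ler_powR; rewrite ?nnegrE // !ger0_norm; lra.
suff ordered s t : a <= s <= c -> a <= t <= c -> s <= t ->
    `|g t - g s| <= (C1 + C2) * `|t - s| `^ lam.
  exists (C1 + C2) => s t sac tac; case: (leP s t) => st; first exact: ordered.
  by rewrite distrC (distrC t); apply: ordered => //; lra.
move=> /andP[as_ sc] /andP[at_ tc] st.
have p0 : 0 <= `|t - s| `^ lam by exact: powR_ge0.
have [tb | bt] := leP t b.
  apply: le_trans (gC1 s t _ _) _; try (apply/andP; split; lra).
  by rewrite mulrDl lerDl mulr_ge0.
have [bs | sb] := leP b s.
  apply: le_trans (gC2 s t _ _) _; try (apply/andP; split; lra).
  by rewrite mulrDl lerDr mulr_ge0.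
have -> : g t - g s = (g t - g b) + (g b - g s) by ring.
apply: le_trans; first exact: ler_normD.
rewrite mulrDl [leRHS]addrC; apply: lerD.
- apply: le_trans (gC2 b t _ _) _; try (apply/andP; split; lra).
  by apply: ler_wpM2l => //; apply: powR_dist_le; lra.
- apply: le_trans (gC1 s b _ _) _; try (apply/andP; split; lra).
  by apply: ler_wpM2l => //; apply: powR_dist_le; lra.
Qed.

Lemma is_holder_segment lam a b c d v g : a <= v + c -> v + d <= b ->
  is_holder lam a b g -> is_holder lam c d (segment g v).
Proof.
move=> ac db [C gC]; exists C => x y /andP[? ?] /andP[? ?].
have -> : y - x = (v + y) - (v + x) by ring.
by apply: gC; apply/andP; split; lra.
Qed.

Lemma holder_seminorm_ge0 lam a b g : 0 <= holder_seminorm lam a b g.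
Proof.
rewrite /holder_seminorm; set E := (X in sup X).
have [Esup | /sup_out->//] := pselect (has_sup E).
have [[e Ee] _] := Esup; apply: le_trans (sup_upper_bound Esup Ee).
by case: Ee => [s [t [_ [_ [_ ->]]]]]; rewrite divr_ge0 ?powR_ge0.
Qed.

Lemma holder_seminorm_increment {lam a b g} s t : is_holder lam a b g ->
  a <= s <= b -> a <= t <= b ->
  `|g t - g s| <= holder_seminorm lam a b g * `|t - s| `^ lam.
Proof.
move=> [C gC] sab tab.
have [-> | st] := eqVneq s t; first by rewrite !subrr normr0 mulr_ge0 ?powR_ge0
  ?holder_seminorm_ge0.
have p0 : 0 < `|t - s| `^ lam.
  by apply: powR_gt0; rewrite normr_gt0 subr_eq0 eq_sym.
rewrite -ler_pdivrMr //; apply: sup_upper_bound; last by exists s, t.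
split; first by exists (`|g t - g s| / `|t - s| `^ lam), s, t.
exists C => _ [x [y [xab [yab [xy ->]]]]].
have q0 : 0 < `|y - x| `^ lam.
  by apply: powR_gt0; rewrite normr_gt0 subr_eq0 eq_sym.
by rewrite ler_pdivrMr // gC.
Qed.

End Hoelder.

Lemma euler_scheme_is_holder (R : realType) (lam tau D : R) (B xi X : R -> R)
    (f : (R -> R) -> R) (n : nat) :
  0 <= lam -> 0 <= tau -> 0 <= D ->
  is_holder lam 0 (n%:R * D) B -> is_holder lam (- tau) 0 xi ->
  (forall t, - tau <= t <= 0 -> X t = xi t) ->
  (forall (k : nat) (t : R), (k < n)%N -> k%:R * D <= t <= k.+1%:R * D ->
      X t = X (k%:R * D) + f (segment X (k%:R * D)) * (B t - B (k%:R * D))) ->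
  is_holder lam (- tau) (n%:R * D) X.
Proof.
move=> lam0 tau0 D0 hB hxi hX0 hXk.
have grid_ge0 k : 0 <= k%:R * D by rewrite mulr_ge0.
suff: forall k, (k <= n)%N -> is_holder lam (- tau) (k%:R * D) X by apply.
elim=> [|k IH] kn.
  by rewrite mul0r; apply: eq_is_holder hxi => x /hX0.
apply: is_holder_glue lam0 _ (grid_le D0 (leqnSn k)) (IH (ltnW kn)) _.
  by have := grid_ge0 k; lra.
apply: is_holder_affine (hXk k ^~ kn) _.
by apply: is_holder_subinterval hB; rewrite ?grid_ge0 ?grid_le.
Qed.

Theorem lemma2 (R : realType) (tau H lam M1 : R) (B xi : R -> R)
    (f : (R -> R) -> R) (n : nat) (X : R -> R) :
  0 < tau ->
  1 / 2 < H < 1 ->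
  1 / 2 < lam < H ->
  (* the fixed path of B^H is lam-Hoelder on [0, T], T = tau *)
  is_holder lam 0 tau B ->
  is_holder lam (- tau) 0 xi ->
  0 < M1 ->
  (forall psi1 psi2 : R -> R,
      is_holder lam (- tau) 0 psi1 -> is_holder lam (- tau) 0 psi2 ->
      `|f psi2 - f psi1| <= M1 * supnorm tau (fun th => psi2 th - psi1 th)) ->
  tau < n%:R ->
  (* Euler scheme, Delta = tau / n, t_k = k * Delta *)
  (forall t, - tau <= t <= 0 -> X t = xi t) ->
  (forall (k : nat) (t : R), (k < n)%N ->
      k%:R * (tau / n%:R) <= t <= k.+1%:R * (tau / n%:R) ->
      X t = X (k%:R * (tau / n%:R))
            + f (segment X (k%:R * (tau / n%:R)))
              * (B t - B (k%:R * (tau / n%:R)))) ->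
  forall i j l : nat, (i <= j)%N -> (j <= l)%N -> (l <= n)%N ->
  let s := i%:R * (tau / n%:R) in
  let u := j%:R * (tau / n%:R) in
  let t := l%:R * (tau / n%:R) in
  `|remR f B X s t - remR f B X s u - remR f B X u t|
    <= M1 * supnorm tau (fun th => segment X u th - segment X s th)
          * holder_seminorm lam 0 tau B * `|t - s| `^ lam.
Proof.
move=> tau0 _ lamH hB hxi _ f_lip taun hX0 hXk i j l ij jl ln; cbv zeta.
set D := tau / n%:R in hXk *.
set s := i%:R * D; set u := j%:R * D; set t := l%:R * D.
have n0 : 0 < n%:R :> R by lra.
have D0 : 0 <= D by rewrite divr_ge0 ?ltW.
have nD : n%:R * D = tau by rewrite /D; field; lra.
have grid k : (k <= n)%N -> 0 <= k%:R * D <= tau.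
  move=> kn; rewrite mulr_ge0 //= -nD; exact: grid_le D0 kn.
have hX : is_holder lam (- tau) tau X.
  rewrite -{2}nD; apply: euler_scheme_is_holder D0 _ hxi hX0 hXk; try lra.
  by rewrite nD.
have segment_holder k : (k <= n)%N -> is_holder lam (- tau) 0 (segment X (k%:R * D)).
  by move=> /grid/andP[? ?]; apply: is_holder_segment hX; lra.
have jn := leq_trans jl ln; have in_ := leq_trans ij jn.
have /andP[u0 _] : 0 <= u <= tau := grid j jn.
have /andP[t0 t_tau] : 0 <= t <= tau := grid l ln.
have su : s <= u := grid_le D0 ij.
have ut : u <= t := grid_le D0 jl.
rewrite remR_defect normrM -mulrA; apply: ler_pM => //.
  exact: f_lip (segment_holder i in_) (segment_holder j jn).
apply: le_trans (holder_seminorm_increment u t hB _ _) _; try (apply/andP; lra).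
apply: ler_wpM2l; first exact: holder_seminorm_ge0.
by apply: ge0_ler_powR; rewrite ?nnegrE // ?ger0_norm; lra.
Qed.
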